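(* Let $\beta_1,\dots,\beta_N>0$ and $u,v\in\mathbb R$ with $\beta_i+u>0$ and $\beta_i+v>0$ for all $i$. Then $\mathbb E^{\boldsymbol\beta,\boldsymbol\beta}_{\mathrm{LGRW}}\big[V(\mathbf L)\big]<\infty$, where $V(\mathbf L)=\big(\sum_{j=1}^Ne^{L_2(j)-L_1(j-1)}\big)^{-(u+v)}e^{-v(L_1(N)-L_2(N))}$.
   Context: Under $\mathbb P^{\boldsymbol\beta,\boldsymbol\beta}_{\mathrm{LGRW}}$, $\mathbf L_1=(L_1(j))_{0\le j\le N}$ and $\mathbf L_2=(L_2(j))_{0\le j\le N}$ are independent random walks with $L_1(0)=L_2(0)=0$ and independent increments $L_i(j)-L_i(j-1)\sim\log\Gamma^{-1}(\beta_j)$, i.e. with density $e^{-\beta_jy-e^{-y}}/\Gamma(\beta_j)$ on $\mathbb R$; $\mathbf L=(\mathbf L_1,\mathbf L_2)$. *)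

From mathcomp Require Import all_boot all_order all_algebra.
From mathcomp Require Import all_classical all_reals all_analysis.
Set Implicit Arguments. Unset Strict Implicit. Unset Printing Implicit Defensive.
Import Order.TTheory GRing.Theory Num.Theory.
Local Open Scope classical_set_scope.
Local Open Scope ring_scope.

Definition GammaF {R : realType} (b : R) : R :=
  fine (\int[@lebesgue_measure R]_(t in [set t : R | (0 < t)%R])
          ((t `^ (b - 1)) * expR (- t))%R%:E)%E.

Definition loginvgamma_density {R : realType} (b y : R) : R :=
  expR (- (b * y) - expR (- y)) / GammaF b.

(* Iterated Lebesgue integral over the coordinates 1..n of a sequence
   z : nat -> R (coordinate 0 is unused and set to 0):
   iint n F = \int dz_n ... \int dz_1 F z.  For nonnegative measurable F this is
   the integral of F over R^n w.r.t. n-dimensional Lebesgue measure (Tonelli). *)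
Fixpoint iint {R : realType} (n : nat) (F : (nat -> R) -> \bar R) : \bar R :=
  match n with
  | 0%N => F (fun _ => 0)
  | n'.+1 => (\int[@lebesgue_measure R]_(t in [set: R])
               iint n' (fun z => F (fun i => if i == n then t else z i)))%E
  end.

Definition walk {R : realType} (x : nat -> R) (j : nat) : R :=
  \sum_(1 <= i < j.+1) x i.

Definition Vfun {R : realType} (N : nat) (u v : R) (L1 L2 : nat -> R) : R :=
  (\sum_(1 <= j < N.+1) expR (L2 j - L1 j.-1)) `^ (- (u + v))
  * expR (- (v * (L1 N - L2 N))).

(* E^{beta,beta}_{LGRW}[ F(L1, L2) ] for a nonnegative functional F, written as the
   integral against the joint density of the 2N independent increments. *)
Definition LGRW_expect {R : realType} (N : nat) (beta : nat -> R)
  (F : (nat -> R) -> (nat -> R) -> R) : \bar R :=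
  iint N (fun x => iint N (fun y =>
    (F (walk x) (walk y)
     * \prod_(1 <= j < N.+1)
         (loginvgamma_density (beta j) (x j) * loginvgamma_density (beta j) (y j)))%:E)).

From mathcomp Require Import all_boot all_order all_algebra.
From mathcomp Require Import all_classical all_reals all_analysis.
From mathcomp Require Import ring lra measurable_realfun.
Import Order.TTheory GRing.Theory Num.Theory.
Import numFieldNormedType.Exports.

(* Write V = exp(-(u+v) ln S - v (L_1(N) - L_2(N))) with S = sum_j e^(L_2(j) - L_1(j-1)).
   If u + v >= 0, bound ln S from below by its first term L_2(1) and its last term
   L_2(N) - L_1(N-1); if u + v < 0, bound ln S from above by ln N plus the positive
   parts of all increments.  Either way the exponent is at most a constant plus a linear
   form in the increments x_j of L_1 and y_j of L_2, with coefficients in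
   [lo, max(0,-v)] and [lo, max(0,-u)] respectively, where lo = -(|u|+|v|).  As
   e^(ct) <= e^(lo t) + e^(hi t) for c in [lo, hi], V is dominated by a product of
   one-variable functions, so the expectation is bounded by a product of integrals of
   (e^(lo t) + e^(hi t)) e^(-beta t - e^(-t)).  These are finite because lo, hi < beta:
   the factor e^(-e^(-t)) controls t -> -oo and e^((hi - beta) t) controls t -> +oo. *)

Local Open Scope ring_scope.

Section exponential_domination.
Context {R : realType}.

Lemma expR_le_expRD (lo hi c t : R) : lo <= c <= hi ->
  expR (c * t) <= expR (lo * t) + expR (hi * t).
Proof.
move=> /andP[loc chi]; have [t0|t0] := leP 0 t.
  have : c * t <= hi * t by rewrite ler_wpM2r.
  by rewrite -ler_expR => /le_trans; apply; rewrite lerDr expR_ge0.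
have : c * t <= lo * t by nra.
by rewrite -ler_expR => /le_trans; apply; rewrite lerDl expR_ge0.
Qed.

Lemma expR_sum_le_prod (I : Type) (r : seq I) (P : pred I) (c t : I -> R) (lo hi : R) :
  (forall i, P i -> lo <= c i <= hi) ->
  expR (\sum_(i <- r | P i) c i * t i) <=
  \prod_(i <- r | P i) (expR (lo * t i) + expR (hi * t i)).
Proof.
move=> chi; rewrite expR_sum; apply: ler_prod => i Pi.
by rewrite expR_ge0 expR_le_expRD ?chi.
Qed.

End exponential_domination.

Section iterated_integral.
Context {R : realType}.
Local Notation mu := (@lebesgue_measure R).

(* Unlike [ge0_le_integral], no measurability is needed: the integral of a
   nonnegative function is a supremum over the simple functions below it. *)
Lemma ge0_le_integral_nonmeas (D : set R) (f g : R -> \bar R) :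
  (forall x, D x -> 0 <= f x)%E -> (forall x, D x -> f x <= g x)%E ->
  (\int[mu]_(x in D) f x <= \int[mu]_(x in D) g x)%E.
Proof.
move=> f0 fg.
have g0 x : D x -> (0 <= g x)%E by move=> Dx; exact: le_trans (f0 x Dx) (fg x Dx).
rewrite (ge0_integralE mu f0) (ge0_integralE mu g0) /=.
apply: ereal_sup_le => _ [h hf <-]; exists h => //= x.
apply: le_trans (hf x) _; rewrite /patch; case: ifP => // /set_mem Dx.
exact: fg.
Qed.

Lemma iint_ge0 n (F : (nat -> R) -> \bar R) :
  (forall z, 0 <= F z)%E -> (0 <= iint n F)%E.
Proof.
elim: n F => [|n IH] F F0 /=; first exact: F0.
by apply: integral_ge0 => t _; apply: IH.
Qed.

Lemma iint_le n (F G : (nat -> R) -> \bar R) :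
  (forall z, 0 <= F z)%E -> (forall z, F z <= G z)%E -> (iint n F <= iint n G)%E.
Proof.
elim: n F G => [|n IH] F G F0 FG /=; first exact: FG.
apply: ge0_le_integral_nonmeas => t _; first exact: iint_ge0.
exact: IH.
Qed.

Lemma iint_prodE n (g : nat -> R -> R) (k : \bar R) :
  (forall j, measurable_fun setT (g j)) -> (forall j t, 0 <= g j t) -> (0 <= k)%E ->
  iint n (fun z => k * (\prod_(1 <= j < n.+1) g j (z j))%:E)%E =
  (k * \prod_(1 <= j < n.+1) \int[mu]_t (g j t)%:E)%E.
Proof.
move=> mg g0; elim: n k => [|n IH] k k0 /=; first by rewrite !big_geq.
have gE t z : \prod_(1 <= j < n.+2) g j (if j == n.+1 then t else z j) =
    \prod_(1 <= j < n.+1) g j (z j) * g n.+1 t.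
  rewrite big_nat_recr //= eqxx; congr (_ * _).
  by apply: eq_big_nat => j /andP[_ jn]; rewrite ltn_eqF.
under eq_integral => t _.
  under eq_fun do rewrite gE EFinM [X in (k * X)%E]muleC muleA.
  rewrite IH ?mule_ge0 ?lee_fin // muleAC muleC.
  over.
rewrite ge0_integralZr //=.
- by rewrite [in RHS]big_nat_recr //= muleC muleA.
- by apply/measurable_EFinP; exact: mg.
- by move=> t _; rewrite lee_fin.
- by rewrite mule_ge0 //; apply: prode_ge0 => j _; apply: integral_ge0 => t _; rewrite lee_fin.
Qed.

End iterated_integral.

Section loginvgamma_moments.
Context {R : realType}.
Local Notation mu := (@lebesgue_measure R).

Lemma GammaF_ge0 (b : R) : 0 <= GammaF b.
Proof.
apply: fine_ge0; apply: integral_ge0 => t _.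
by rewrite lee_fin mulr_ge0 ?powR_ge0 ?expR_ge0.
Qed.

Lemma loginvgamma_density_ge0 (b t : R) : 0 <= loginvgamma_density b t.
Proof. by rewrite mulr_ge0 ?expR_ge0 // invr_ge0 GammaF_ge0. Qed.

Lemma measurable_expRM (a : R) : measurable_fun setT (fun t : R => expR (a * t)).
Proof. by apply: measurableT_comp => //; exact: measurable_funM. Qed.

Lemma measurable_loginvgamma_density (b : R) :
  measurable_fun setT (loginvgamma_density b).
Proof.
apply: measurable_funM => //; apply: measurableT_comp => //.
apply: measurable_funB; first by apply: measurableT_comp => //; exact: measurable_funM.
by apply: measurableT_comp => //; exact: measurableT_comp.
Qed.

Lemma tilted_exponent_le (g t : R) : 0 < g ->
  - (g * t) - expR (- t) <= g ^+ 2 - Num.min g 1 * `|t|.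
Proof.
move=> g0.
have d0 : 0 < Num.min g 1 by rewrite lt_min g0 ltr01.
have dg : Num.min g 1 <= g by rewrite ge_min lexx.
have d1 : Num.min g 1 <= 1 by rewrite ge_min lexx orbT.
set d := Num.min g 1 in d0 dg d1 *.
have [t0|t0] := leP 0 t.
  rewrite ger0_norm //.
  have := expR_ge0 (- t).
  have : 0 <= (g - d) * t by rewrite mulr_ge0 // subr_ge0.
  have := sqr_ge0 g.
  nra.
(* for t < 0, e^{-t} = (e^{-t/2})^2 >= (1 - t/2)^2 *)
have et : (1 - t / 2) ^+ 2 <= expR (- t).
  have -> : - t = - t / 2 + - t / 2 by field.
  have := expR_ge1Dx (- t / 2).
  rewrite expRD expr2 => h; apply: ler_pM => //; lra.
rewrite ltr0_norm //.
have := sqr_ge0 (g + t / 2).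
have : 0 <= (1 - d) * (- t) by rewrite mulr_ge0 // ?subr_ge0 // oppr_ge0 ltW.
nra.
Qed.

Lemma expR_density_le (a b t : R) : a < b ->
  expR (a * t) * loginvgamma_density b t <=
  expR ((b - a) ^+ 2) / GammaF b * expR (- (Num.min (b - a) 1 * `|t|)).
Proof.
move=> ab; rewrite /loginvgamma_density mulrA -expRD [leRHS]mulrAC -expRD.
rewrite ler_wpM2r ?invr_ge0 ?GammaF_ge0 // ler_expR.
have -> : a * t + (- (b * t) - expR (- t)) = - ((b - a) * t) - expR (- t) by ring.
by apply: tilted_exponent_le; rewrite subr_gt0.
Qed.

Lemma continuous_expR_Nabs (d : R) : continuous (fun t : R => expR (- (d * `|t|))).
Proof.
move=> x; apply: continuous_comp; last exact: continuous_expR.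
apply: (@continuousN _ R^o); apply: (@continuousM _ R^o (fun=> d) (fun t => `|t|)).
  exact: cst_continuous.
exact: norm_continuous.
Qed.

Lemma integral_expR_Nabs_lty (d : R) : 0 < d ->
  (\int[mu]_t (expR (- (d * `|t|)))%:E < +oo)%E.
Proof.
move=> d0; rewrite ge0_symfun_integralT //; last 2 first.
- exact: continuous_expR_Nabs.
- by move=> t /=; rewrite normrN.
apply: lte_mul_pinfty => //.
apply: (@le_lt_trans _ _ (\int[mu]_t (d^-1 * exponential_pdf d t)%:E))%E.
  rewrite integral_mkcond; apply: ge0_le_integral_nonmeas => t _.
    by apply: erestrict_ge0 => s _; rewrite lee_fin expR_ge0.
  rewrite /patch; case: ifP => [/set_mem /= t0|_].
    by rewrite exponential_pdfE // lee_fin ger0_norm // mulrA mulVf ?gt_eqF // mul1r mulNr.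
  by rewrite lee_fin mulr_ge0 ?invr_ge0 ?exponential_pdf_ge0 ?ltW.
under eq_integral do rewrite EFinM.
rewrite ge0_integralZl_EFin ?invr_ge0 ?ltW //.
- by rewrite integral_exponential_pdf // mule1 ltry.
- by move=> t _; rewrite lee_fin exponential_pdf_ge0 // ltW.
- by apply/measurable_EFinP; apply: measurable_exponential_pdf; rewrite ltW.
Qed.

Lemma integral_expR_density_lty (a b : R) : a < b ->
  (\int[mu]_t (expR (a * t) * loginvgamma_density b t)%:E < +oo)%E.
Proof.
move=> ab; set d := Num.min (b - a) 1.
have d0 : 0 < d by rewrite lt_min subr_gt0 ab ltr01.
set K := expR ((b - a) ^+ 2) / GammaF b.
have K0 : 0 <= K by rewrite mulr_ge0 ?expR_ge0 // invr_ge0 GammaF_ge0.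
apply: (@le_lt_trans _ _ (\int[mu]_t (K * expR (- (d * `|t|)))%:E))%E.
  apply: ge0_le_integral_nonmeas => t _.
    by rewrite lee_fin mulr_ge0 ?expR_ge0 ?loginvgamma_density_ge0.
  by rewrite lee_fin expR_density_le.
under eq_integral do rewrite EFinM.
rewrite ge0_integralZl_EFin //.
- by apply: lte_mul_pinfty => //; exact: integral_expR_Nabs_lty.
- by apply/measurable_EFinP; apply: continuous_measurable_fun; exact: continuous_expR_Nabs.
Qed.

Lemma integral_expRD_density_lty (a1 a2 b : R) : a1 < b -> a2 < b ->
  (\int[mu]_t ((expR (a1 * t) + expR (a2 * t)) * loginvgamma_density b t)%:E < +oo)%E.
Proof.
move=> a1b a2b; under eq_integral do rewrite mulrDl EFinD.
rewrite ge0_integralD //; first by rewrite lte_add_pinfty ?integral_expR_density_lty.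
all: by [move=> t _; rewrite lee_fin mulr_ge0 ?expR_ge0 ?loginvgamma_density_ge0
        | apply/measurable_EFinP; apply: measurable_funM;
          [exact: measurable_expRM | exact: measurable_loginvgamma_density]].
Qed.

Lemma prod_integral_expRD_density_fin_num N (beta : nat -> R) (a1 a2 : R) :
  (forall j, (1 <= j <= N)%N -> a1 < beta j) ->
  (forall j, (1 <= j <= N)%N -> a2 < beta j) ->
  (\prod_(1 <= j < N.+1) \int[mu]_t
     ((expR (a1 * t) + expR (a2 * t)) * loginvgamma_density (beta j) t)%:E
   \is a fin_num)%E.
Proof.
move=> a1b a2b; rewrite big_nat_cond; apply: prode_fin_num => j /andP[jN _].
rewrite ge0_fin_numE ?integral_expRD_density_lty ?a1b ?a2b //.
by apply: integral_ge0 => t _; rewrite lee_fin mulr_ge0 ?addr_ge0 ?expR_ge0 ?loginvgamma_density_ge0.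
Qed.

End loginvgamma_moments.

Section LGRW_expectation.
Context {R : realType}.
Local Notation mu := (@lebesgue_measure R).

Lemma LGRW_expect_le_prod N (beta : nat -> R) (F : (nat -> R) -> (nat -> R) -> R)
    (K : R) (f g : nat -> R -> R) :
  (forall j, measurable_fun setT (f j)) -> (forall j, measurable_fun setT (g j)) ->
  (forall j t, 0 <= f j t) -> (forall j t, 0 <= g j t) -> 0 <= K ->
  (forall x y, 0 <= F (walk x) (walk y)) ->
  (forall x y, F (walk x) (walk y) <=
     K * \prod_(1 <= j < N.+1) f j (x j) * \prod_(1 <= j < N.+1) g j (y j)) ->
  (LGRW_expect N beta F <=
   K%:E * \prod_(1 <= j < N.+1) \int[mu]_t (f j t * loginvgamma_density (beta j) t)%:E
        * \prod_(1 <= j < N.+1) \int[mu]_t (g j t * loginvgamma_density (beta j) t)%:E)%E.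
Proof.
move=> mf mg f0 g0 K0 F0 FK; rewrite /LGRW_expect; set rho := loginvgamma_density.
have rho0 b t : 0 <= rho b t by exact: loginvgamma_density_ge0.
have mrho b : measurable_fun setT (rho b) by exact: measurable_loginvgamma_density.
clearbody rho.
pose fr j t := f j t * rho (beta j) t; pose gr j t := g j t * rho (beta j) t.
have fr0 j t : 0 <= fr j t by rewrite mulr_ge0.
have gr0 j t : 0 <= gr j t by rewrite mulr_ge0.
have mfr j : measurable_fun setT (fr j) by exact: measurable_funM.
have mgr j : measurable_fun setT (gr j) by exact: measurable_funM.
apply: (@le_trans _ _ (iint N (fun x => iint N (fun y =>
    (K * \prod_(1 <= j < N.+1) fr j (x j))%:E * (\prod_(1 <= j < N.+1) gr j (y j))%:E)%E))).
  apply: iint_le => x.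
    by apply: iint_ge0 => y; rewrite lee_fin mulr_ge0 ?prodr_ge0 // => j _; rewrite mulr_ge0.
  apply: iint_le => y; first by rewrite lee_fin mulr_ge0 ?prodr_ge0 // => j _; rewrite mulr_ge0.
  rewrite -EFinM lee_fin.
  have -> : K * \prod_(1 <= j < N.+1) fr j (x j) * \prod_(1 <= j < N.+1) gr j (y j) =
      K * \prod_(1 <= j < N.+1) f j (x j) * \prod_(1 <= j < N.+1) g j (y j) *
      \prod_(1 <= j < N.+1) (rho (beta j) (x j) * rho (beta j) (y j)).
    by rewrite /fr /gr !big_split /=; ring.
  by rewrite ler_wpM2r ?FK ?prodr_ge0 // => j _; rewrite mulr_ge0.
under eq_fun do rewrite iint_prodE ?lee_fin ?mulr_ge0 ?prodr_ge0 // EFinM muleAC.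
rewrite iint_prodE ?mule_ge0 ?lee_fin ?prode_ge0 // => [|j _]; last first.
  by apply: integral_ge0 => t _; rewrite lee_fin.
by rewrite muleAC.
Qed.

End LGRW_expectation.

Section walk.
Context {R : realType}.
Implicit Types (x y : nat -> R) (N : nat).

Lemma walk0 x : walk x 0 = 0.
Proof. by rewrite /walk big_geq. Qed.

Lemma walkS x n : walk x n.+1 = walk x n + x n.+1.
Proof. by rewrite /walk big_nat_recr. Qed.

Lemma walk_le_sum_max0 x j N : (j <= N)%N ->
  walk x j <= \sum_(1 <= i < N.+1) Num.max (x i) 0.
Proof.
move=> jN; rewrite (big_cat_nat _ (n := j.+1)) //= -[walk x j]addr0.
apply: lerD; first by apply: ler_sum_nat => i _; rewrite le_max lexx.
by apply: sumr_ge0 => i _; rewrite le_max lexx orbT.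
Qed.

Definition gap_sum N x y := \sum_(1 <= j < N.+1) expR (walk y j - walk x j.-1).

Lemma expR_gap_le_gap_sum N x y j : (1 <= j <= N)%N ->
  expR (walk y j - walk x j.-1) <= gap_sum N x y.
Proof.
case/andP=> j1 jN; rewrite /gap_sum (big_cat_nat _ (n := j)) ?(leqW jN) //=.
rewrite [\sum_(j <= i < N.+1) _]big_ltn ?ltnS // addrCA lerDl.
by rewrite addr_ge0 ?sumr_ge0 // => i _; exact: expR_ge0.
Qed.

Lemma gap_sum_gt0 N x y : (0 < N)%N -> 0 < gap_sum N x y.
Proof.
move=> N0; apply: lt_le_trans (expR_gt0 _) (expR_gap_le_gap_sum N x y 1 _).
by rewrite leqnn N0.
Qed.

Lemma gap_le_ln_gap_sum N x y j : (1 <= j <= N)%N ->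
  walk y j - walk x j.-1 <= ln (gap_sum N x y).
Proof.
move=> jN; have S0 : 0 < gap_sum N x y by apply: gap_sum_gt0; case/andP: jN; exact: leq_trans.
by rewrite -ler_expR lnK ?posrE // expR_gap_le_gap_sum.
Qed.

Lemma ln_gap_sum_le N x y : (0 < N)%N ->
  ln (gap_sum N x y) <=
  ln N%:R + \sum_(1 <= i < N.+1) (Num.max (y i) 0 + Num.max (- x i) 0).
Proof.
move=> N0; set T := \sum_(1 <= i < N.+1) _.
have gapT j : (1 <= j <= N)%N -> walk y j - walk x j.-1 <= T.
  case/andP=> _ jN; rewrite /T big_split /= -sumrN.
  apply: lerD; first exact: walk_le_sum_max0.
  by apply: (walk_le_sum_max0 (fun i => - x i)); rewrite (leq_trans (leq_pred j)).
have SN : gap_sum N x y <= N%:R * expR T.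
  apply: (@le_trans _ _ (\sum_(1 <= j < N.+1) expR T)).
    by apply: ler_sum_nat => j jN; rewrite ler_expR gapT.
  by rewrite sumr_const_nat subSS subn0 mulr_natl.
rewrite -[T in _ + T]expRK -lnM ?posrE ?expR_gt0 ?ltr0n //.
by rewrite ler_ln ?posrE ?gap_sum_gt0 ?mulr_gt0 ?expR_gt0 ?ltr0n.
Qed.

Lemma Vfun_walkE N (u v : R) x y : (0 < N)%N ->
  Vfun N u v (walk x) (walk y) =
  expR (- (u + v) * ln (gap_sum N x y) - v * (walk x N - walk y N)).
Proof.
move=> N0; rewrite /Vfun -/(gap_sum N x y) /powR gt_eqF ?gap_sum_gt0 //.
by rewrite -expRD mulNr.
Qed.

Lemma walk_exponent_le_split N (u v m : R) x y : (0 < N)%N -> 0 <= m <= u + v ->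
  - (u + v) * ln (gap_sum N x y) - v * (walk x N - walk y N) <=
  \sum_(1 <= j < N.+1) ((if (j < N)%N then m - v else - v) * x j
                       + (if j == 1%N then - u else v - m) * y j).
Proof.
(* ln S is bounded below by its j = 1 term with weight u + v - m and by its
   j = N term with weight m. *)
case: N => // N _ /andP[m0 muv]; set L := ln (gap_sum N.+1 x y).
have L1 : y 1%N <= L.
  by have := gap_le_ln_gap_sum N.+1 x y 1 isT; rewrite walk0 subr0 /walk big_nat1.
have LN : walk y N.+1 - walk x N <= L by apply: gap_le_ln_gap_sum; rewrite /= leqnn.
have xE : \sum_(1 <= j < N.+2) (if (j < N.+1)%N then m - v else - v) * x j =
    (m - v) * walk x N - v * x N.+1.
  rewrite big_nat_recr //= ltnn mulNr /walk mulr_sumr; congr (_ - _).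
  by apply: eq_big_nat => j /andP[_ jN]; rewrite jN.
have yE : \sum_(1 <= j < N.+2) (if j == 1%N then - u else v - m) * y j =
    - u * y 1%N + (v - m) * (walk y N.+1 - y 1%N).
  have -> : walk y N.+1 - y 1%N = \sum_(2 <= j < N.+2) y j.
    by rewrite /walk big_ltn // addrC addKr.
  rewrite big_ltn //= mulr_sumr; congr (_ + _).
  by apply: eq_big_nat => j /andP[j2 _]; rewrite gtn_eqF.
rewrite big_split /= xE yE (walkS x).
have : 0 <= (u + v - m) * (L - y 1%N) by rewrite mulr_ge0 // subr_ge0.
have : 0 <= m * (L - (walk y N.+1 - walk x N)) by rewrite mulr_ge0 // subr_ge0.
nra.
Qed.

Lemma walk_exponent_le_nonpos N (u v : R) x y : (0 < N)%N -> u + v <= 0 ->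
  - (u + v) * ln (gap_sum N x y) - v * (walk x N - walk y N) <=
  - (u + v) * ln N%:R + \sum_(1 <= j < N.+1) ((if x j < 0 then u else - v) * x j
                                            + (if 0 < y j then - u else v) * y j).
Proof.
move=> N0 uv0; set q := - (u + v).
have q0 : 0 <= q by rewrite oppr_ge0.
set T := \sum_(1 <= j < N.+1) (Num.max (y j) 0 + Num.max (- x j) 0).
have coefE j : (if x j < 0 then u else - v) * x j + (if 0 < y j then - u else v) * y j =
    q * (Num.max (y j) 0 + Num.max (- x j) 0) + (v * y j - v * x j).
  have -> : Num.max (- x j) 0 = if x j < 0 then - x j else 0.
    by case: (ltP (x j) 0) => xj; [rewrite max_l // oppr_ge0 ltW | rewrite max_r // oppr_le0].
  have -> : Num.max (y j) 0 = if 0 < y j then y j else 0.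
    by case: (ltP 0 (y j)).
  by rewrite /q; case: (ltP (x j) 0) => _; case: (ltP 0 (y j)) => _; ring.
rewrite (eq_bigr _ (fun j _ => coefE j)) big_split /= -mulr_sumr -/T.
rewrite sumrB -!mulr_sumr.
have := ln_gap_sum_le N x y N0; rewrite -/T => LT.
have : 0 <= q * (ln N%:R + T - ln (gap_sum N x y)) by rewrite mulr_ge0 // subr_ge0.
rewrite /walk; nra.
Qed.

Lemma Vfun_walk_le N (u v : R) (x y : nat -> R) : (0 < N)%N ->
  Vfun N u v (walk x) (walk y) <=
  expR (Num.max 0 (- (u + v)) * ln N%:R)
  * \prod_(1 <= j < N.+1) (expR (- (`|u| + `|v|) * x j) + expR (Num.max 0 (- v) * x j))
  * \prod_(1 <= j < N.+1) (expR (- (`|u| + `|v|) * y j) + expR (Num.max 0 (- u) * y j)).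
Proof.
move=> N0; set lo := - (`|u| + `|v|); set hx := Num.max 0 (- v); set hy := Num.max 0 (- u).
suff [C [cx [cy [CN cxP cyP Ele]]]] : exists C (cx cy : nat -> R),
    [/\ C <= Num.max 0 (- (u + v)) * ln N%:R, forall j, lo <= cx j <= hx,
        forall j, lo <= cy j <= hy &
        - (u + v) * ln (gap_sum N x y) - v * (walk x N - walk y N) <=
        C + \sum_(1 <= j < N.+1) (cx j * x j + cy j * y j)].
  rewrite Vfun_walkE // -mulrA.
  apply: le_trans (_ : _ <= expR (C + \sum_(1 <= j < N.+1) (cx j * x j + cy j * y j))) _.
    by rewrite ler_expR.
  rewrite expRD big_split expRD /=.
  apply: ler_pM; rewrite ?expR_ge0 ?mulr_ge0 ?expR_ge0 //; first by rewrite ler_expR.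
  by apply: ler_pM; rewrite ?expR_ge0 // expR_sum_le_prod.
have lou : lo <= u /\ lo <= - u.
  rewrite /lo; have := normr_ge0 v; have := ler_norm u; have := ler_norm (- u).
  by rewrite normrN; lra.
have lov : lo <= v /\ lo <= - v.
  rewrite /lo; have := normr_ge0 u; have := ler_norm v; have := ler_norm (- v).
  by rewrite normrN; lra.
have hxv : 0 <= hx /\ - v <= hx by rewrite /hx !le_max !lexx orbT.
have hyu : 0 <= hy /\ - u <= hy by rewrite /hy !le_max !lexx orbT.
have [uv0|uv0] := leP 0 (u + v).
  set m := Num.min (Num.max v 0) (u + v).
  have m0 : 0 <= m by rewrite le_min le_max lexx orbT uv0.
  have muv : m <= u + v by rewrite ge_min lexx orbT.
  have mvh : m - v <= hx.
    have : m <= Num.max v 0 by rewrite ge_min lexx.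
    by case: (leP 0 v); lra.
  have vmh : v - m <= hy.
    have : v <= Num.max v 0 by rewrite le_max lexx.
    by rewrite /m; case: (leP (Num.max v 0) (u + v)); lra.
  exists 0, (fun j => if (j < N)%N then m - v else - v),
    (fun j => if j == 1%N then - u else v - m); split.
  - by rewrite mulr_ge0 ?le_max ?lexx // ln_ge0 // ler1n.
  - by move=> j; case: ifP => _; apply/andP; lra.
  - by move=> j; case: ifP => _; apply/andP; lra.
  - by rewrite add0r walk_exponent_le_split // m0 muv.
exists (- (u + v) * ln N%:R), (fun j => if x j < 0 then u else - v),
  (fun j => if 0 < y j then - u else v); split.
- by rewrite max_r // oppr_ge0 ltW.
- by move=> j; case: ifP => _; apply/andP; lra.
- by move=> j; case: ifP => _; apply/andP; lra.
- exact: walk_exponent_le_nonpos (ltW uv0).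
Qed.

End walk.

Theorem proposition3p15 (R : realType) (N : nat) (beta : nat -> R) (u v : R) :
  (0 < N)%N ->
  (forall j, (1 <= j <= N)%N -> 0 < beta j) ->
  (forall j, (1 <= j <= N)%N -> 0 < beta j + u) ->
  (forall j, (1 <= j <= N)%N -> 0 < beta j + v) ->
  (LGRW_expect N beta (Vfun N u v) < +oo)%E.
Proof.
move=> N0 hb hu hv.
set lo := - (`|u| + `|v|); set hx := Num.max 0 (- v); set hy := Num.max 0 (- u).
have mexp a b : measurable_fun setT (fun t : R => expR (a * t) + expR (b * t)).
  by apply: measurable_funD; exact: measurable_expRM.
have exp0 (a b t : R) : 0 <= expR (a * t) + expR (b * t) by rewrite addr_ge0 ?expR_ge0.
have Vfun0 x y : 0 <= Vfun N u v (walk x) (walk y) by rewrite mulr_ge0 ?powR_ge0 ?expR_ge0.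
apply: le_lt_trans (LGRW_expect_le_prod N beta _ _ _ _ (fun=> mexp lo hx) (fun=> mexp lo hy)
  (fun=> exp0 lo hx) (fun=> exp0 lo hy) (expR_ge0 _) Vfun0
  (fun x y => Vfun_walk_le N u v x y N0)) _.
have lo_lt j : (1 <= j <= N)%N -> lo < beta j.
  by move=> jN; rewrite /lo; have := hb j jN; have := normr_ge0 u; have := normr_ge0 v; lra.
have hx_lt j : (1 <= j <= N)%N -> hx < beta j.
  by move=> jN; rewrite gt_max hb //=; have := hv j jN; lra.
have hy_lt j : (1 <= j <= N)%N -> hy < beta j.
  by move=> jN; rewrite gt_max hb //=; have := hu j jN; lra.
by rewrite ltey_eq !fin_numM ?prod_integral_expRD_density_fin_num.
Qed.
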